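(* Let $\varphi=(\varphi_1,\varphi_2)$ be a solution of the system $(S_1^0)$ on $(0,\infty)$. (i) If $\varphi_1(r),\varphi_2(r)\to0$ as $r\to0^+$ and $\varphi_1(r),\varphi_2(r)>0$ for all sufficiently small $r>0$, then $\varphi_1(r)>0$ and $\varphi_2(r)>0$ for all $r\in(0,\infty)$. (ii) If $\varphi_1(r),\varphi_2(r)\to0$ as $r\to\infty$ and $\varphi_1(r),\varphi_2(r)>0$ for all sufficiently large $r$, then $\varphi_1(r)>0$ and $\varphi_2(r)>0$ for all $r\in(0,\infty)$.
   Context: Let $w:[0,\infty)\to\mathbb{R}$ be the unique solution of $w''+\frac1r w'-\frac1{r^2}w+(1-w^2)w=0$ on $(0,\infty)$ with $w(0)=0$ and $w(r)\to1$ as $r\to\infty$; it satisfies $0<w<1$ and $w'>0$ on $(0,\infty)$. The system $(S_1^0)$ is, for $\varphi=(\varphi_1,\varphi_2)$ real-valued, $$\varphi''+\Big(2\frac{w'}{w}+\frac1r\Big)\varphi'-\frac1{r^2}\begin{pmatrix}1&2\\2&1+2w^2r^2\end{pmatrix}\varphi=0.$$ *)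

From Stdlib Require Import Reals.
From Coquelicot Require Import Coquelicot.
Open Scope R_scope.

Definition is_profile (w dw ddw : R -> R) : Prop :=
  w 0 = 0 /\
  filterlim w (at_right 0) (locally 0) /\
  (forall r, 0 < r -> is_derive w r (dw r) /\ is_derive dw r (ddw r)) /\
  (forall r, 0 < r ->
     ddw r + dw r / r - w r / (r ^ 2) + (1 - (w r) ^ 2) * w r = 0) /\
  is_lim w p_infty 1.

Definition solves_S10 (w dw : R -> R)
  (p1 dp1 ddp1 p2 dp2 ddp2 : R -> R) : Prop :=
  forall r, 0 < r ->
    is_derive p1 r (dp1 r) /\ is_derive dp1 r (ddp1 r) /\
    is_derive p2 r (dp2 r) /\ is_derive dp2 r (ddp2 r) /\
    ddp1 r + (2 * dw r / w r + 1 / r) * dp1 r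
      - (1 / r ^ 2) * (1 * p1 r + 2 * p2 r) = 0 /\
    ddp2 r + (2 * dw r / w r + 1 / r) * dp2 r
      - (1 / r ^ 2) * (2 * p1 r + (1 + 2 * (w r) ^ 2 * r ^ 2) * p2 r) = 0.

(* Each component satisfies (r w^2 phi_i')' = r w^2 q_i, where q_i is the
   right-hand side of its equation, and the system is cooperative: q_1 and q_2
   are positive wherever phi_1 and phi_2 both are.  On an interval of joint
   positivity the flux r w^2 phi_i' is therefore strictly increasing, so phi_i
   has no interior maximum there.  If joint positivity were lost at a first
   point m (part (i)), or, coming from infinity, at a last point m (part (ii)),
   then the component vanishing at m, which is positive on the interval and
   tends to 0 at its other end, would have such an interior maximum. *)

From Stdlib Require Import Reals Lra Classical.
From Coquelicot Require Import Coquelicot.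
Open Scope R_scope.

Lemma lub_approx (E : R -> Prop) (m y : R) :
  is_lub E m -> y < m -> exists x, E x /\ y < x.
Proof.
  intros [_ Hleast] Hy. apply NNPP; intro Hnone.
  assert (m <= y).
  { apply Hleast; intros x Ex. apply Rnot_lt_le; intro Hyx. apply Hnone. eauto. }
  lra.
Qed.

Lemma real_induction_up (U : R -> Prop) (d : R) :
  (forall x, 0 < x -> U x -> locally x U) ->
  0 < d -> (forall x, 0 < x < d -> U x) ->
  (forall m, 0 < m -> (forall x, 0 < x < m -> U x) -> U m) ->
  forall r, 0 < r -> U r.
Proof.
  intros Hopen Hd Hstart Hstep r Hr. apply NNPP; intro HUr.
  set (G := fun x => 0 < x /\ forall y, 0 < y <= x -> U y).
  assert (G_bound : is_upper_bound G r).
  { intros x [_ Hx]. apply Rnot_lt_le; intro. apply HUr, Hx. lra. }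
  assert (G_start : G (d / 2)).
  { split; [lra|]. intros y Hy. apply Hstart. lra. }
  destruct (completeness G (ex_intro _ r G_bound) (ex_intro _ _ G_start))
    as [m Hm].
  assert (Hm0 : 0 < m) by (pose proof (proj1 Hm _ G_start); lra).
  assert (Hbelow : forall x, 0 < x < m -> U x).
  { intros x Hx. destruct (lub_approx G m x Hm (proj2 Hx)) as [z [[_ Hz] Hxz]].
    apply Hz. lra. }
  destruct (Hopen m Hm0 (Hstep m Hm0 Hbelow)) as [e He].
  pose proof (cond_pos e) as He0.
  assert (Hfurther : G (m + e / 2)).
  { split; [lra|]. intros y Hy. destruct (Rlt_or_le y m).
    - apply Hbelow. lra.
    - apply He. change (Rabs (y - m) < e). apply Rabs_def1; lra. }
  pose proof (proj1 Hm _ Hfurther). lra.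
Qed.

Lemma real_induction_down (U : R -> Prop) (M : R) :
  (forall x, 0 < x -> U x -> locally x U) ->
  (forall x, M < x -> U x) ->
  (forall m, 0 < m -> (forall x, m < x -> U x) -> U m) ->
  forall r, 0 < r -> U r.
Proof.
  intros Hopen Hend Hstep r Hr. apply NNPP; intro HUr.
  set (E := fun x => 0 < x /\ ~ U x).
  assert (E_bound : is_upper_bound E M).
  { intros x [_ Hx]. apply Rnot_lt_le; intro. apply Hx, Hend. lra. }
  destruct (completeness E (ex_intro _ M E_bound) (ex_intro _ r (conj Hr HUr)))
    as [m Hm].
  assert (Hm0 : 0 < m) by (pose proof (proj1 Hm r (conj Hr HUr)); lra).
  assert (Habove : forall x, m < x -> U x).
  { intros x Hx. apply NNPP; intro HUx.
    pose proof (proj1 Hm x (conj (Rlt_trans _ _ _ Hm0 Hx) HUx)). lra. }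
  destruct (Hopen m Hm0 (Hstep m Hm0 Habove)) as [e He].
  pose proof (cond_pos e) as He0.
  destruct (lub_approx E m (m - e) Hm ltac:(lra)) as [x [Ex Hx]].
  pose proof (proj1 Hm x Ex).
  apply (proj2 Ex), He. change (Rabs (x - m) < e). apply Rabs_def1; lra.
Qed.

Lemma locally_pos_of_continuous (f : R -> R) (x : R) :
  continuous f x -> 0 < f x -> locally x (fun y => 0 < f y).
Proof. intros Hf Hx. apply (Hf (fun z => 0 < z)). now apply open_gt. Qed.

Lemma eventually_lt_of_lim0 (F : (R -> Prop) -> Prop) (p : R -> R) (y : R) :
  filterlim p F (locally 0) -> 0 < y -> F (fun a => p a < y).
Proof. intros Hp Hy. apply (Hp (fun z => z < y)). now apply open_lt. Qed.

Lemma at_right_lt (x c : R) : x < c -> at_right x (fun a => x < a < c).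
Proof.
  intros Hc. assert (Hcx : 0 < c - x) by lra.
  exists (mkposreal (c - x) Hcx). intros a Hball Ha.
  change (Rabs (a - x) < c - x) in Hball. apply Rabs_def2 in Hball. lra.
Qed.

Definition radial_op (w dw dp ddp : R -> R) (r : R) : R :=
  ddp r + (2 * dw r / w r + 1 / r) * dp r.

Definition flux (w dp : R -> R) (r : R) : R := r * w r ^ 2 * dp r.

Section RadialEquation.

Variables w dw p dp ddp : R -> R.
Hypothesis w_pos : forall r, 0 < r -> 0 < w r.
Hypothesis w_derive : forall r, 0 < r -> is_derive w r (dw r).
Hypothesis p_derive : forall r, 0 < r -> is_derive p r (dp r).
Hypothesis dp_derive : forall r, 0 < r -> is_derive dp r (ddp r).

Lemma flux_weight_pos r : 0 < r -> 0 < r * w r ^ 2.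
Proof.
  intros Hr. apply Rmult_lt_0_compat; [lra|]. apply pow_lt, w_pos, Hr.
Qed.

Lemma flux_derive r :
  0 < r -> is_derive (flux w dp) r (r * w r ^ 2 * radial_op w dw dp ddp r).
Proof.
  intros Hr. pose proof (w_pos r Hr) as Hw.
  pose proof (w_derive r Hr) as Hw'. pose proof (dp_derive r Hr) as Hdp'.
  unfold flux. auto_derive.
  - split; [exists (dw r) | split; [exists (ddp r)|]]; auto.
  - change (fun x => w x) with w; change (fun x => dp x) with dp.
    rewrite (is_derive_unique _ _ _ Hw'), (is_derive_unique _ _ _ Hdp').
    unfold radial_op. field. lra.
Qed.

Lemma flux_increasing a b :
  0 <= a -> (forall r, a < r < b -> 0 < radial_op w dw dp ddp r) ->
  forall x y, a < x -> x < y -> y < b -> flux w dp x < flux w dp y.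
Proof.
  intros Ha Hrad.
  apply (incr_function _ a b (fun r => r * w r ^ 2 * radial_op w dw dp ddp r));
    simpl; intros r Har Hrb.
  - apply flux_derive. lra.
  - apply Rmult_lt_0_compat; [apply flux_weight_pos | apply Hrad]; lra.
Qed.

(* By the mean value theorem a non-strict interior maximum at c would give
   points c1 < c < c2 with p'(c1) >= 0 >= p'(c2), against the monotone flux. *)
Lemma no_interior_max a c b :
  0 < a -> a < c -> c < b ->
  (forall r, a < r < b -> 0 < radial_op w dw dp ddp r) ->
  p c < Rmax (p a) (p b).
Proof.
  intros Ha Hac Hcb Hrad. apply Rnot_le_lt; intro Hmax.
  pose proof (Rle_trans _ _ _ (Rmax_l _ _) Hmax) as Hca.
  pose proof (Rle_trans _ _ _ (Rmax_r _ _) Hmax) as Hcb'.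
  destruct (MVT_cor2 p dp a c) as [c1 [Hc1 Hc1']]; [exact Hac| |].
  { intros x Hx. apply is_derive_Reals, p_derive. lra. }
  destruct (MVT_cor2 p dp c b) as [c2 [Hc2 Hc2']]; [exact Hcb| |].
  { intros x Hx. apply is_derive_Reals, p_derive. lra. }
  assert (Hdp1 : 0 <= dp c1) by nra.
  assert (Hdp2 : dp c2 <= 0) by nra.
  pose proof (flux_weight_pos c1 ltac:(lra)).
  pose proof (flux_weight_pos c2 ltac:(lra)).
  pose proof (flux_increasing a b (Rlt_le _ _ Ha) Hrad c1 c2 ltac:(lra) ltac:(lra) ltac:(lra)).
  unfold flux in *. nra.
Qed.

Lemma pos_of_pos_from_zero m :
  filterlim p (at_right 0) (locally 0) -> 0 < m ->
  (forall r, 0 < r < m -> 0 < p r /\ 0 < radial_op w dw dp ddp r) ->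
  0 < p m.
Proof.
  intros Hlim Hm Hpos.
  assert (Hc : 0 < p (m / 2)) by (apply Hpos; lra).
  destruct (filter_ex (F := at_right 0) _ (filter_and _ _ (eventually_lt_of_lim0 _ p _ Hlim Hc)
                                       (at_right_lt 0 (m / 2) ltac:(lra))))
    as [a [Hpa Ha]].
  pose proof (no_interior_max a (m / 2) m ltac:(lra) ltac:(lra) ltac:(lra)
                (fun r Hr => proj2 (Hpos r ltac:(lra)))) as Hmax.
  revert Hmax. unfold Rmax. destruct Rle_dec; lra.
Qed.

Lemma pos_of_pos_to_infinity m :
  is_lim p p_infty 0 -> 0 < m ->
  (forall r, m < r -> 0 < p r /\ 0 < radial_op w dw dp ddp r) ->
  0 < p m.
Proof.
  intros Hlim Hm Hpos.
  assert (Hc : 0 < p (m + 1)) by (apply Hpos; lra).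
  destruct (eventually_lt_of_lim0 _ p _ Hlim Hc) as [M HM].
  set (b := Rmax (m + 2) (M + 1)).
  assert (Hb : m + 2 <= b /\ M + 1 <= b) by (split; [apply Rmax_l | apply Rmax_r]).
  pose proof (HM b ltac:(lra)) as Hpb.
  pose proof (no_interior_max m (m + 1) b Hm ltac:(lra) ltac:(lra)
                (fun r Hr => proj2 (Hpos r ltac:(lra)))) as Hmax.
  revert Hmax. unfold Rmax at 1. destruct Rle_dec; lra.
Qed.

End RadialEquation.

Section SystemS10.

Variables w dw p1 dp1 ddp1 p2 dp2 ddp2 : R -> R.
Hypothesis Hsol : solves_S10 w dw p1 dp1 ddp1 p2 dp2 ddp2.

Lemma S10_radial_op_pos r :
  0 < r -> 0 < p1 r -> 0 < p2 r ->
  0 < radial_op w dw dp1 ddp1 r /\ 0 < radial_op w dw dp2 ddp2 r.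
Proof.
  intros Hr H1 H2. destruct (Hsol r Hr) as (_ & _ & _ & _ & E1 & E2).
  assert (Hr2 : 0 < 1 / r ^ 2) by (apply Rdiv_lt_0_compat; [lra | apply pow_lt; lra]).
  assert (Hcoef : 0 <= 2 * w r ^ 2 * r ^ 2).
  { apply Rmult_le_pos; [apply Rmult_le_pos; [lra|] |]; apply pow2_ge_0. }
  unfold radial_op. split.
  - replace (_ + _) with (1 / r ^ 2 * (1 * p1 r + 2 * p2 r)) by lra.
    apply Rmult_lt_0_compat; lra.
  - replace (_ + _) with (1 / r ^ 2 * (2 * p1 r + (1 + 2 * w r ^ 2 * r ^ 2) * p2 r))
      by lra.
    apply Rmult_lt_0_compat; nra.
Qed.

Lemma S10_joint_pos_open r :
  0 < r -> 0 < p1 r /\ 0 < p2 r ->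
  locally r (fun s => 0 < p1 s /\ 0 < p2 s).
Proof.
  intros Hr [H1 H2]. destruct (Hsol r Hr) as (D1 & _ & D2 & _).
  apply filter_and; apply locally_pos_of_continuous; try assumption.
  - apply (ex_derive_continuous p1). now exists (dp1 r).
  - apply (ex_derive_continuous p2). now exists (dp2 r).
Qed.

End SystemS10.

Theorem lemma3p7 (w dw ddw : R -> R)
  (Hw : is_profile w dw ddw)
  (Hwpos : forall r, 0 < r -> 0 < w r < 1)
  (Hdwpos : forall r, 0 < r -> 0 < dw r)
  (p1 dp1 ddp1 p2 dp2 ddp2 : R -> R)
  (Hsol : solves_S10 w dw p1 dp1 ddp1 p2 dp2 ddp2) :
  ((filterlim p1 (at_right 0) (locally 0) /\
    filterlim p2 (at_right 0) (locally 0) /\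
    (exists d, 0 < d /\ forall r, 0 < r < d -> 0 < p1 r /\ 0 < p2 r)) ->
   forall r, 0 < r -> 0 < p1 r /\ 0 < p2 r) /\
  ((is_lim p1 p_infty 0 /\ is_lim p2 p_infty 0 /\
    (exists M, forall r, M < r -> 0 < p1 r /\ 0 < p2 r)) ->
   forall r, 0 < r -> 0 < p1 r /\ 0 < p2 r).
Proof.
  destruct Hw as (_ & _ & Hwd & _).
  assert (Wpos : forall r, 0 < r -> 0 < w r) by (intros r Hr; apply Hwpos, Hr).
  assert (Wd : forall r, 0 < r -> is_derive w r (dw r)) by (intros r Hr; apply Hwd, Hr).
  assert (D1 : forall r, 0 < r -> is_derive p1 r (dp1 r)) by (intros r Hr; apply Hsol, Hr).
  assert (DD1 : forall r, 0 < r -> is_derive dp1 r (ddp1 r)) by (intros r Hr; apply Hsol, Hr).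
  assert (D2 : forall r, 0 < r -> is_derive p2 r (dp2 r)) by (intros r Hr; apply Hsol, Hr).
  assert (DD2 : forall r, 0 < r -> is_derive dp2 r (ddp2 r)) by (intros r Hr; apply Hsol, Hr).
  pose proof (S10_radial_op_pos _ _ _ _ _ _ _ _ Hsol) as Hrad.
  pose proof (S10_joint_pos_open _ _ _ _ _ _ _ _ Hsol) as Hopen.
  split.
  - intros (L1 & L2 & d & Hd & Hnear).
    apply (real_induction_up _ d Hopen Hd Hnear). intros m Hm IH.
    split; [apply (pos_of_pos_from_zero w dw p1 dp1 ddp1)
           | apply (pos_of_pos_from_zero w dw p2 dp2 ddp2)]; auto;
      intros r Hr; destruct (IH r Hr); split; auto; apply Hrad; auto; lra.
  - intros (L1 & L2 & M & Hfar).
    apply (real_induction_down _ M Hopen Hfar). intros m Hm IH.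
    split; [apply (pos_of_pos_to_infinity w dw p1 dp1 ddp1)
           | apply (pos_of_pos_to_infinity w dw p2 dp2 ddp2)]; auto;
      intros r Hr; destruct (IH r Hr); split; auto; apply Hrad; auto; lra.
Qed.
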